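(* For every $\varepsilon>0$ there is $\delta>0$ such that the following holds. Let $G=(V_1,V_2,E)$ be a bipartite graph with $|V_1|\ge|V_2|/2$, and let $\mathcal P=\{\mathbf p_1,\ldots,\mathbf p_k\}$ be an $\varepsilon$-pair-matching in $V_1$ of size $k=|V_2|^{0.5}$. If $W\subset V_2$ is chosen uniformly at random among all subsets of $V_2$, then $\mathbb P\big(|A^W_{\mathcal P}|\ge\delta|V_2|^{0.5}\big)\ge 3/4$, where $$A^W_{\mathcal P}:=\{d^W_{\mathbf p_i}: i\in[k]\}\cap[-3|V_2|^{0.5},3|V_2|^{0.5}].$$
   Context: A bipartite graph $G=(V_1,V_2,E)$ has vertex set $V_1\sqcup V_2$ and edge set $E\subset V_1\times V_2$; $N(v)$ is the neighbourhood and $d(v)$ the degree of $v$, and for $S\subset V_2$, $d^S(v)=|N(v)\cap S|$. For $u,v\in V_1$, $\mathrm{divb}(u,v)$ is the larger of $N(u)\setminus N(v)$, $N(v)\setminus N(u)$ (either if equal). Ordered pairs $\mathbf p=(u,v)$ of distinct vertices are written so that $\mathrm{divb}(\mathbf p)=N(u)\setminus N(v)$; $d_{\mathbf p}:=d(u)-d(v)$ and $d^S_{\mathbf p}:=d^S(u)-d^S(v)$. An $\varepsilon$-pair-matching of size $k$ associated to $V_1$ is a collection of pairwise vertex-disjoint ordered pairs $\mathbf p_i=(x_i,y_i)$, $i\in[k]$, of vertices of $V_1$ with $d_{\mathbf p_i}\le|V_2|^{0.5}$ for all $i$, and $|\mathrm{divb}(\mathbf p_i)\setminus N(x_j)|\ge\varepsilon|V_2|$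 and $|\mathrm{divb}(\mathbf p_i)\setminus N(y_j)|\ge\varepsilon|V_2|$ for all $i\ne j$ in $[k]$. Floors/ceilings of non-integer sizes are ignored. *)

From HB Require Import structures.
From mathcomp Require Import all_boot all_order all_algebra.
From mathcomp Require Import reals.
Set Implicit Arguments. Unset Strict Implicit. Unset Printing Implicit Defensive.
Import Order.TTheory GRing.Theory Num.Theory.
Local Open Scope ring_scope.

Section Bipartite.
Variables (V1 V2 : finType) (adj : V1 -> V2 -> bool).

Definition nbhd (v : V1) : {set V2} := [set w | adj v w].
Definition deg (v : V1) : nat := #|nbhd v|.
Definition degS (S : {set V2}) (v : V1) : nat := #|nbhd v :&: S|.

(* An ordered pair p = (u,v) is written so that divb(p) = N(u) \ N(v),
   i.e. |N(u)\N(v)| >= |N(v)\N(u)| *)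
Definition ordered_pair (u v : V1) : bool :=
  (u != v) && (#|nbhd v :\: nbhd u| <= #|nbhd u :\: nbhd v|)%N.
Definition divb_p (u v : V1) : {set V2} := nbhd u :\: nbhd v.
Definition d_p (u v : V1) : int := (deg u)%:Z - (deg v)%:Z.
Definition dS_p (S : {set V2}) (u v : V1) : int := (degS S u)%:Z - (degS S v)%:Z.

Definition pair_matching (R : realType) (eps : R) (k : nat)
    (x y : 'I_k -> V1) : Prop :=
  let n := #|V2| in
  [/\ (forall i, ordered_pair (x i) (y i)),
      (forall i j, i != j -> [&& x i != x j, y i != y j & x i != y j]),
      (forall i, (d_p (x i) (y i))%:~R <= Num.sqrt (n%:R : R)),
      (forall i j, i != j -> eps * n%:R <= #|divb_p (x i) (y i) :\: nbhd (x j)|%:R) &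
      (forall i j, i != j -> eps * n%:R <= #|divb_p (x i) (y i) :\: nbhd (y j)|%:R)].

Definition A_set (R : realType) (k : nat) (x y : 'I_k -> V1) (W : {set V2})
    : seq int :=
  undup [seq dS_p W (x i) (y i) | i <- enum 'I_k &
           `|(dS_p W (x i) (y i))%:~R| <= 3 * Num.sqrt (#|V2|%:R : R)].

End Bipartite.

From HB Require Import structures.
From mathcomp Require Import all_boot all_order all_algebra.
From mathcomp Require Import reals.
From mathcomp Require Import zify ring lra.
Import Order.TTheory GRing.Theory Num.Theory.
Set Implicit Arguments. Unset Strict Implicit. Unset Printing Implicit Defensive.

(* Write n = |V2| and s = sqrt n.  For a uniform W, 2 d^W_p - d_p is a sum of
   independent signs weighted by N(u) - N(v), so its second moment is at most n
   and, by Chebyshev, d^W_{p_i} leaves [-3s, 3s] with probability at most 1/25.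
   For i <> j, d^W_{p_i} - d^W_{p_j} has a constant nonzero increment on a set of
   size at least |divb(p_i) \ N(x_j)| / 2 >= eps n / 2, so by the
   Erdos-Littlewood-Offord (Sperner) bound it vanishes with probability
   O(1 / sqrt (eps n)).  Using only the first k' ~ (eps / 32) s pairs, the
   expected number of outliers and collisions is below k'/8, so by Markov with
   probability at least 3/4 more than k'/2 distinct values lie in [-3s, 3s]. *)

Lemma bin_odd_half t : 'C(t.*2.+1, t) * t.+1 = t.*2.+1 * 'C(t.*2, t).
Proof.
have -> : 'C(t.*2.+1, t) = 'C(t.*2.+1, t.+1).
  by rewrite -bin_sub; [congr 'C(_, _) | ]; lia.
by rewrite mulnC -mul_bin_diag.
Qed.

Lemma bin_even_half_succ t : 'C(t.+1.*2, t.+1) = 2 * 'C(t.*2.+1, t).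
Proof.
apply/eqP; rewrite -(eqn_pmul2l (ltn0Sn t)) -mul_bin_diag doubleS -!muln2.
by apply/eqP; ring.
Qed.

(* The weight 2t+1 makes the induction close: (2t+1)(2t+3) <= 4(t+1)^2. *)
Lemma bin_even_half_sq_bound t : 'C(t.*2, t) ^ 2 * t.*2.+1 <= 16 ^ t.
Proof.
elim: t => [|t IH]; first by rewrite bin0.
rewrite -(@leq_pmul2r (t.+1 ^ 2)) ?expn_gt0 // bin_even_half_succ.
have -> : (2 * 'C(t.*2.+1, t)) ^ 2 * t.+1.*2.+1 * t.+1 ^ 2
    = 4 * ('C(t.*2.+1, t) * t.+1) ^ 2 * t.+1.*2.+1 by ring.
rewrite bin_odd_half.
have -> : 4 * (t.*2.+1 * 'C(t.*2, t)) ^ 2 * t.+1.*2.+1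
    = 4 * (t.*2.+1 * t.+1.*2.+1) * ('C(t.*2, t) ^ 2 * t.*2.+1) by ring.
rewrite [16 ^ _]expnS [leqRHS]mulnAC leq_mul //.
by rewrite -!muln2; nia.
Qed.

Lemma bin_half_sq_bound m : 'C(m, m./2) ^ 2 * m.+1 <= 4 ^ m.
Proof.
have [[t ->]|[t ->]] : {t | m = t.*2} + {t | m = t.*2.+1}.
  by case: (odd m) (odd_double_half m) => /= <-; [right|left]; exists m./2.
  by rewrite doubleK -[X in 4 ^ X]mul2n expnM bin_even_half_sq_bound.
rewrite /= uphalf_double -(@leq_pmul2r (t.+1 ^ 2)) ?expn_gt0 //.
have -> : 'C(t.*2.+1, t) ^ 2 * t.*2.+2 * t.+1 ^ 2
    = ('C(t.*2.+1, t) * t.+1) ^ 2 * t.*2.+2 by ring.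
rewrite bin_odd_half.
have -> : (t.*2.+1 * 'C(t.*2, t)) ^ 2 * t.*2.+2
    = (t.*2.+1 * t.*2.+2) * ('C(t.*2, t) ^ 2 * t.*2.+1) by ring.
rewrite [4 ^ _]expnS -[X in 4 ^ X]mul2n expnM [leqRHS]mulnAC leq_mul ?bin_even_half_sq_bound //.
by rewrite -!muln2; nia.
Qed.

Lemma leq_bin_half m j : 'C(m, j) <= 'C(m, m./2).
Proof.
have m_halves := odd_double_half m.
have bin_mono i : i < m./2 -> 'C(m, i) <= 'C(m, i.+1).
  move=> lt_i_half; rewrite -(leq_pmul2l (ltn0Sn i)) mul_bin_left leq_mul2r.
  by apply/orP; right; lia.
have below d : d <= m./2 -> 'C(m, m./2 - d) <= 'C(m, m./2).
  elim: d => [|d IHd] le_d; first by rewrite subn0.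
  apply: leq_trans (IHd (ltnW le_d)).
  by rewrite (_ : m./2 - d = (m./2 - d.+1).+1) ?bin_mono //; lia.
have [le_j_half|lt_half_j] := leqP j m./2.
  by rewrite -(subKn le_j_half) below ?leq_subr.
have [le_jm|/bin_small -> //] := leqP j m.
rewrite -bin_sub // -(@subKn (m - j) m./2) ?below ?leq_subr //; lia.
Qed.

Lemma card_set_of (T : finType) : #|{: {set T}}| = 2 ^ #|T|.
Proof. by rewrite -cardsT -card_powerset; apply: eq_card => A; rewrite !inE subsetT. Qed.

Lemma sqr_exp2 n : (2 ^ n) ^ 2 = 4 ^ n.
Proof. by rewrite -expnM mulnC expnM. Qed.

Section AntiConcentration.
Variables (T : finType) (c : T -> int) (M : {set T}) (t : int).
Hypotheses (t_neq0 : t != 0) (c_M : {in M, forall w, c w = t}).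

Lemma sum_split_const (W : {set T}) :
  (\sum_(w in W) c w = t *+ #|W :&: M| + \sum_(w in W :\: M) c w)%R.
Proof.
rewrite (big_setID M) /= -sumr_const; congr (_ + _)%R.
by apply: eq_bigr => w /setIP[_ /c_M].
Qed.

(* On a fibre, W is determined by W :&: M, whose size is fixed by the value of the sum. *)
Lemma card_sum_eq_fibre_le (z : int) (U : {set T}) :
  #|[set W : {set T} | (\sum_(w in W) c w == z)%R & W :\: M == U]|
     <= 'C(#|M|, #|M|./2).
Proof.
set F := [set W | _ & _].
have [W0 W0F|/eq_card0 -> //] := pickP (mem F).
apply: leq_trans (leq_bin_half _ #|W0 :&: M|); rewrite -cards_draws.
have inj_IM : {in F &, injective (fun W => W :&: M)}.
  move=> W1 W2; rewrite !inE => /andP[_ /eqP W1U] /andP[_ /eqP W2U] eqIM.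
  by rewrite -(setID W1 M) -(setID W2 M) eqIM W1U W2U.
rewrite -(card_in_imset inj_IM); apply/subset_leq_card/subsetP => _ /imsetP[W WF ->].
rewrite inE subsetIr /=.
move: WF W0F; rewrite !inE => /andP[/eqP sumW /eqP WU] /andP[/eqP sumW0 /eqP W0U].
have := sum_split_const W; rewrite sumW WU -W0U -sumW0 sum_split_const.
by move=> /addIr /(mulrIn t_neq0) ->.
Qed.

Lemma card_sum_eq_le (z : int) :
  #|[set W : {set T} | (\sum_(w in W) c w == z)%R]|
     <= 2 ^ (#|T| - #|M|) * 'C(#|M|, #|M|./2).
Proof.
rewrite -sum1_card (partition_big (fun W => W :\: M) (mem (powerset (~: M)))); last first.
  by move=> W _; rewrite /= powersetE setDE subsetIr.
have -> : #|T| - #|M| = #|~: M| by rewrite [#|~: M|]cardsCs setCK.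
rewrite -card_powerset -sum_nat_const leq_sum // => U _.
rewrite sum_nat_cond_const muln1; apply: leq_trans (card_sum_eq_fibre_le z U).
by apply/subset_leq_card/subsetP => W; rewrite !inE.
Qed.

Lemma anticoncentration (z : int) :
  #|[set W : {set T} | (\sum_(w in W) c w == z)%R]| ^ 2 * #|M|.+1 <= 4 ^ #|T|.
Proof.
apply: leq_trans (_ : (2 ^ (#|T| - #|M|) * 'C(#|M|, #|M|./2)) ^ 2 * #|M|.+1 <= _).
  by rewrite leq_mul2r leq_exp2r // card_sum_eq_le orbT.
rewrite -{2}(subnK (max_card (mem M))) (expnD 4) expnMn sqr_exp2 -mulnA.
by rewrite leq_mul2l bin_half_sq_bound orbT.
Qed.

End AntiConcentration.

Lemma sum_nat_pred_card (T : finType) (P : pred T) : \sum_t P t = #|[set t | P t]|.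
Proof. by rewrite -sum1dep_card [RHS]big_mkcond; apply: eq_bigr => t _; case: (P t). Qed.

Lemma sum1_ord_lt k k' : k' <= k -> \sum_(i < k | i < k') 1 = k'.
Proof. by move=> le_k'k; rewrite -(big_ord_widen _ (fun=> 1) le_k'k) sum1_card card_ord. Qed.

Lemma markov_card_nat (T : finType) (P : pred T) (f : T -> nat) a :
  (forall t, P t -> a <= f t) -> #|[set t | P t]| * a <= \sum_t f t.
Proof.
move=> P_f; rewrite -sum_nat_cond_const [leqRHS](bigID P) /=.
exact: leq_trans (@leq_sum _ _ _ _ _ P_f) (leq_addr _ _).
Qed.

(* Each index below k' is an outlier, repeats an earlier value, or brings a new one. *)
Lemma leq_prefix_undup (T : eqType) k k' (f : 'I_k -> T) (P : pred 'I_k) :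
  k' <= k ->
  k' <= size (undup [seq f i | i <- enum 'I_k & P i])
        + \sum_(i < k | i < k') ~~ P i
        + \sum_(i < k | i < k') \sum_(j < k | j < i) (f j == f i).
Proof.
move=> le_k'k.
set G := [set i : 'I_k | [&& i < k', P i & [forall j : 'I_k, (j < i) ==> (f j != f i)]]].
have card_G : #|G| <= size (undup [seq f i | i <- enum 'I_k & P i]).
  rewrite cardE -(size_map f); apply: uniq_leq_size.
    rewrite map_inj_in_uniq ?enum_uniq // => i1 i2.
    rewrite !mem_enum !inE => /and3P[_ _ /forallP fresh1] /and3P[_ _ /forallP fresh2] eq_f.
    apply/val_inj/eqP; case: ltngtP => // [lt12|lt21].
      by have := fresh2 i1; rewrite lt12 eq_f eqxx.
    by have := fresh1 i2; rewrite lt21 eq_f eqxx.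
  move=> z /mapP[i]; rewrite mem_enum inE => /and3P[_ Pi _] ->.
  by rewrite mem_undup map_f // mem_filter Pi mem_enum.
rewrite -[leqLHS](sum1_ord_lt le_k'k).
apply: (@leq_trans (\sum_(i < k | i < k') ((i \in G) + ~~ P i
                     + \sum_(j < k | j < i) (f j == f i)))).
  apply: leq_sum => i lt_ik'; have [//|i_notin_G] := boolP (i \in G).
  have [nPi|/negPn Pi] := boolP (~~ P i); first by rewrite addnC addnA leq_addl.
  move: i_notin_G; rewrite inE lt_ik' Pi => /forallPn[j].
  rewrite negb_imply negbK => /andP[lt_ji eq_f].
  by rewrite (bigD1 j) //= eq_f addnC addnA leq_addr.
rewrite !big_split /= leq_add2r leq_add2r; apply: leq_trans card_G.
apply: leq_trans (_ : _ <= \sum_i (i \in G)) _.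
  by rewrite [leqRHS](bigID (fun i : 'I_k => i < k')) leq_addr.
by rewrite -sum1_card [leqRHS]big_mkcond leq_sum // => i _; case: (i \in G).
Qed.

Local Open Scope ring_scope.

Section SecondMoment.
Variables (R : realFieldType) (T : finType).

Definition spin (W : {set T}) (w : T) : R := if w \in W then 1 else -1.

Definition toggle (w0 : T) (W : {set T}) : {set T} :=
  if w0 \in W then W :\ w0 else w0 |: W.

Lemma toggleK w0 : involutive (toggle w0).
Proof.
move=> W; rewrite /toggle; have [w0W|w0NW] := boolP (w0 \in W).
  by rewrite setD11 setD1K.
by rewrite setU11 setU1K.
Qed.

Lemma spin_toggle w0 W w :
  spin (toggle w0 W) w = if w == w0 then - spin W w else spin W w.
Proof.
rewrite /spin /toggle.
have [w0W|w0NW] := boolP (w0 \in W); have [->|neq] := eqVneq w w0.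
- by rewrite setD11 w0W.
- by rewrite in_setD1 neq.
- by rewrite setU11 (negbTE w0NW) opprK.
- by rewrite in_setU1 (negbTE neq).
Qed.

Lemma spin_sqr W w : spin W w * spin W w = 1.
Proof. by rewrite /spin; case: (w \in W); rewrite ?mulrNN mulr1. Qed.

Lemma sum_spin_mul w w' : w != w' -> \sum_(W : {set T}) spin W w * spin W w' = 0.
Proof.
move=> neq_ww'; set S := \sum_(W : {set T}) _.
suff : S = - S by lra.
rewrite {1}/S (reindex_inj (can_inj (toggleK w'))) -sumrN; apply: eq_bigr => W _.
by rewrite !spin_toggle (negbTE neq_ww') eqxx mulrN.
Qed.

Lemma second_moment_spin (a : T -> R) :
  \sum_(W : {set T}) (\sum_w a w * spin W w) ^+ 2 = (2 ^ #|T|)%:R * \sum_w a w ^+ 2.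
Proof.
transitivity (\sum_(W : {set T}) \sum_w \sum_w' a w * a w' * (spin W w * spin W w')).
  apply: eq_bigr => W _; rewrite expr2 mulr_suml; apply: eq_bigr => w _.
  by rewrite mulr_sumr; apply: eq_bigr => w' _; ring.
rewrite exchange_big mulr_sumr; apply: eq_bigr => w _; rewrite exchange_big.
rewrite (bigD1 w) //= [X in _ + X]big1 => [|w' neq]; last first.
  by rewrite -mulr_sumr sum_spin_mul ?mulr0 // eq_sym.
under eq_bigr do rewrite spin_sqr mulr1.
by rewrite sumr_const card_set_of addr0 mulr_natl expr2.
Qed.

End SecondMoment.

Arguments spin {R T} W w.

Lemma markov_card (R : numDomainType) (T : finType) (P : pred T) (f : T -> R) (a : R) :
  (forall t, 0 <= f t) -> (forall t, P t -> a <= f t) ->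
  #|[set t | P t]|%:R * a <= \sum_t f t.
Proof.
move=> f_ge0 P_f; rewrite (bigID P) /= -[X in X <= _]addr0 lerD ?sumr_ge0 //.
rewrite mulr_natl -sumr_const (eq_bigl P) => [|t]; last by rewrite inE.
exact: ler_sum.
Qed.

Lemma card_setI_sum (R : pzSemiRingType) (T : finType) (A W : {set T}) :
  (#|A :&: W|%:R : R) = \sum_(w in W) (w \in A)%:R.
Proof.
rewrite -sum1_card natr_sum big_mkcond [RHS]big_mkcond /=; apply: eq_bigr => w _.
by rewrite inE; case: (w \in A); case: (w \in W).
Qed.

Section PairDegrees.
Variables (V1 V2 : finType) (adj : V1 -> V2 -> bool).

Lemma dS_p_sum (W : {set V2}) (u v : V1) :
  dS_p adj W u v = \sum_(w in W) ((adj u w)%:Z - (adj v w)%:Z).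
Proof.
rewrite /dS_p /degS sumrB -!natz !card_setI_sum.
by congr (_ - _); apply: eq_bigr => w _; rewrite inE natz.
Qed.

Lemma d_p_dS_pT (u v : V1) : d_p adj u v = dS_p adj setT u v.
Proof. by rewrite /d_p /dS_p /degS !setIT. Qed.

Lemma d_p_ge0 (u v : V1) : ordered_pair adj u v -> 0 <= d_p adj u v.
Proof.
move=> /andP[_ le_vu]; rewrite /d_p /deg subr_ge0 lez_nat.
rewrite -(cardsID (nbhd adj v) (nbhd adj u)) -(cardsID (nbhd adj u) (nbhd adj v)).
by rewrite setIC leq_add2l.
Qed.

Lemma dS_p_spin (R : realFieldType) (W : {set V2}) (u v : V1) :
  2 * (dS_p adj W u v)%:~R - (d_p adj u v)%:~R
    = \sum_w ((adj u w)%:Z - (adj v w)%:Z)%:~R * spin W w :> R.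
Proof.
rewrite d_p_dS_pT !dS_p_sum !rmorph_sum /= mulr_sumr big_mkcond /=.
rewrite [X in _ - X](eq_bigl predT) => [|w]; last by rewrite inE.
rewrite -sumrB; apply: eq_bigr => w _; rewrite /spin.
by case: (w \in W); case: (adj u w); case: (adj v w); rewrite /= ?mulr1 ?mulrN1; lra.
Qed.

Lemma card_far_dS_p (R : rcfType) (u v : V1) :
  (0 < #|V2|)%N -> 0 <= d_p adj u v -> (d_p adj u v)%:~R <= Num.sqrt (#|V2|%:R : R) ->
  (#|[set W : {set V2} | (3 * Num.sqrt (#|V2|%:R : R) < `|(dS_p adj W u v)%:~R|)%R]| * 25
     <= 2 ^ #|V2|)%N.
Proof.
move=> V2_gt0 d_ge0 d_le_s; set N := #|V2| in V2_gt0 d_le_s *.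
set s := Num.sqrt (N%:R : R) in d_le_s *.
have s_ge0 : 0 <= s by rewrite sqrtr_ge0.
have s2 : s ^+ 2 = N%:R by rewrite sqr_sqrtr // ler0n.
set a := fun w => ((adj u w)%:Z - (adj v w)%:Z)%:~R : R.
have sum_a2 : \sum_w a w ^+ 2 <= N%:R.
  rewrite /N -sum1_card natr_sum ler_sum // => w _.
  by rewrite /a; case: (adj u w); case: (adj v w); rewrite /= ?expr2; lra.
have far W : 3 * s < `|(dS_p adj W u v)%:~R| -> 25 * N%:R <= (\sum_w a w * spin W w) ^+ 2.
  rewrite -(dS_p_spin R) -s2; move: (dS_p adj W u v)%:~R => Z.
  have : 0 <= (d_p adj u v)%:~R :> R by rewrite ler0z.
  by rewrite ltr_normr => ? /orP[] ?; nra.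
have := markov_card (fun W => sqr_ge0 _) far; rewrite second_moment_spin => markov.
have := le_trans markov (ler_wpM2l (ler0n _ _) sum_a2).
by rewrite mulrA -natrM ler_pM2r ?ltr0n // ler_nat.
Qed.

Lemma card_dS_p_eq (xi yi xj yj : V1) :
  (#|[set W : {set V2} | dS_p adj W xi yi == dS_p adj W xj yj]| ^ 2
     * (#|divb_p adj xi yi :\: nbhd adj xj|./2).+1 <= 4 ^ #|V2|)%N.
Proof.
pose c w := (adj xi w)%:Z - (adj yi w)%:Z - ((adj xj w)%:Z - (adj yj w)%:Z).
have -> : [set W | dS_p adj W xi yi == dS_p adj W xj yj]
        = [set W : {set V2} | \sum_(w in W) c w == 0].
  by apply/setP => W; rewrite !inE !dS_p_sum -subr_eq0 -sumrB.
set D := divb_p adj xi yi :\: nbhd adj xj.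
(* On D the increment is 1 + [w \in N(yj)]: use the larger of its two level sets. *)
have c_D w : w \in D -> c w = 1 + (adj yj w)%:Z.
  by rewrite /c /D !inE => /and3P[/negPf -> /negPf -> ->]; rewrite subr0 sub0r opprK.
have half_le m : (#|D| <= m.*2)%N -> (#|D|./2 <= m)%N.
  by move/half_leq; rewrite doubleK.
have D_split := cardsID (nbhd adj yj) D.
have [le_DN|lt_ND] := leqP #|D :\: nbhd adj yj| #|D :&: nbhd adj yj|.
- apply: leq_trans (anticoncentration (c := c) (M := D :&: nbhd adj yj) (t := 2) _ _ 0) => //.
    by rewrite leq_mul2l ltnS half_le ?orbT //; lia.
  by move=> w /setIP[/c_D ->]; rewrite inE => ->.
- apply: leq_trans (anticoncentration (c := c) (M := D :\: nbhd adj yj) (t := 1) _ _ 0) => //.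
    by rewrite leq_mul2l ltnS half_le ?orbT //; lia.
  by move=> w /setDP[/c_D ->]; rewrite inE => /negPf ->.
Qed.

End PairDegrees.

Section PairMatchingCounts.
Variables (R : realType) (V1 V2 : finType) (adj : V1 -> V2 -> bool) (eps : R).
Variables (k : nat) (x y : 'I_k -> V1) (k' : nat).
Hypotheses (matching : pair_matching adj eps x y) (le_k'k : (k' <= k)%N).
Local Close Scope ring_scope.

Local Notation N := #|V2|.
Local Notation Z W i := (dS_p adj W (x i) (y i)).

Definition centred (W : {set V2}) (i : 'I_k) : bool :=
  (`|(Z W i)%:~R| <= 3 * Num.sqrt (N%:R : R))%R.

Definition outliers (W : {set V2}) : nat := \sum_(i < k | i < k') ~~ centred W i.

Definition collisions (W : {set V2}) : nat :=
  \sum_(i < k | i < k') \sum_(j < k | j < i) (Z W j == Z W i).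

Lemma leq_size_A_set W : k' <= size (A_set adj R x y W) + outliers W + collisions W.
Proof. exact: leq_prefix_undup. Qed.

Lemma sum_outliers : 0 < N -> (\sum_W outliers W) * 25 <= k' * 2 ^ N.
Proof.
move=> N_gt0; have [ordered _ d_le _ _] := matching.
rewrite exchange_big big_distrl /= -[X in _ <= X * _](sum1_ord_lt le_k'k) big_distrl /=.
apply: leq_sum => i _; rewrite mul1n sum_nat_pred_card.
have -> : [set W | ~~ centred W i] = [set W | (3 * Num.sqrt (N%:R : R) < `|(Z W i)%:~R|)%R].
  by apply/setP => W; rewrite !inE /centred -ltNge.
exact: card_far_dS_p (d_p_ge0 (ordered i)) (d_le i).
Qed.

Lemma sum_collisions : ((k'.-1 ^ 2 * 512)%:R <= eps * N%:R)%R ->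
  (\sum_W collisions W) * 16 <= k' * 2 ^ N.
Proof.
move=> k'_small; have [_ _ _ divb_x _] := matching.
have [k'_le1|k'_gt1] := leqP k' 1.
  rewrite big1 // => W _; rewrite /collisions big1 // => i lt_ik'.
  by rewrite big1 // => j lt_ji; lia.
have a_gt0 : 0 < k'.-1 by lia.
have pair_bound (i j : 'I_k) : j < i -> 16 * k'.-1 * #|[set W | Z W j == Z W i]| <= 2 ^ N.
  move=> lt_ji; have := divb_x j i (negbT (ltn_eqF lt_ji)).
  have := card_dS_p_eq adj (x j) (y j) (x i) (y i).
  set D := divb_p _ _ _ :\: _; set c := #|_| => c_bound D_large.
  have a_D : k'.-1 ^ 2 * 256 <= #|D|./2.
    have : k'.-1 ^ 2 * 512 <= #|D| by rewrite -(ler_nat R) (le_trans k'_small).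
    by move/half_leq; rewrite (_ : _ * 512 = (k'.-1 ^ 2 * 256).*2) ?doubleK // -muln2 -mulnA.
  rewrite -(@leq_exp2r _ _ 2) // sqr_exp2; apply: leq_trans c_bound.
  have -> : (16 * k'.-1 * c) ^ 2 = c ^ 2 * (k'.-1 ^ 2 * 256) by ring.
  by rewrite leq_mul2l (leq_trans a_D) ?orbT.
rewrite /collisions exchange_big; under eq_bigr do rewrite exchange_big /=.
under eq_bigr do under eq_bigr do rewrite sum_nat_pred_card.
rewrite -[X in _ <= X * _](sum1_ord_lt le_k'k) -(leq_pmul2r a_gt0) -!mulnA !big_distrl /=.
apply: leq_sum => i lt_ik'; rewrite big_distrl mul1n /=.
apply: (@leq_trans (\sum_(j < k | j < i) 2 ^ N)).
  by apply: leq_sum => j lt_ji; rewrite mulnC pair_bound.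
rewrite sum_nat_cond_const -sum1dep_card (sum1_ord_lt (ltnW (ltn_ord i))) mulnC leq_mul2l.
by apply/orP; right; lia.
Qed.

Lemma card_A_set_large : 0 < k' -> 0 < N ->
  ((k'.-1 ^ 2 * 512)%:R <= eps * N%:R)%R ->
  3 * 2 ^ N <= 4 * #|[set W | k' < 2 * size (A_set adj R x y W)]|.
Proof.
move=> k'_gt0 N_gt0 k'_small.
set bad := [set W | k' <= 2 * (outliers W + collisions W)].
have card_bad : #|bad| * 4 <= 2 ^ N.
  have := markov_card_nat (f := fun W => 2 * (outliers W + collisions W)) (a := k') (fun W => id).
  rewrite -big_distrr big_split /=.
  have := sum_outliers N_gt0; have := sum_collisions k'_small.
  set So := \sum_W outliers W; set Sc := \sum_W collisions W.
  rewrite -/bad => SC SO markov; rewrite -(leq_pmul2l k'_gt0).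
  by move: (2 ^ N) #|bad| SC SO markov => P b; lia.
have good : ~: bad \subset [set W | k' < 2 * size (A_set adj R x y W)].
  by apply/subsetP => W; rewrite !inE -ltnNge => lt_k'; have := leq_size_A_set W; lia.
have := cardsC bad; rewrite card_set_of => card_split.
have := subset_leq_card good; lia.
Qed.

End PairMatchingCounts.

Lemma natr_le_scale_lt (R : realFieldType) (e s : R) (t k : nat) :
  0 <= e <= 1 -> 1 <= s < k.+1%:R -> t%:R <= e / 32 * s -> (t < k)%N.
Proof.
move=> /andP[e_ge0 e_le1] /andP[s_ge1 s_lt_k1] t_le; rewrite -natr1 in s_lt_k1.
have es_le_s : e * s <= s by rewrite ler_piMl // (le_trans ler01).
have k_ge1 : 1 <= k%:R :> R by rewrite ler1n -(ltr_nat R); lra.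
by rewrite -(ltr_nat R); lra.
Qed.

Lemma natr_le_scale_sqr (R : realFieldType) (e eps s : R) (t : nat) :
  0 <= e <= 1 -> e <= eps -> t%:R <= e / 32 * s -> (t ^ 2 * 512)%:R <= eps * s ^+ 2.
Proof.
move=> /andP[e_ge0 e_le1] e_le_eps t_le; rewrite natrM natrX.
have t_ge0 : 0 <= t%:R :> R by [].
have : t%:R ^+ 2 <= (e / 32 * s) ^+ 2 by nra.
have s2_ge0 : 0 <= s ^+ 2 by rewrite sqr_ge0.
have e2_le_e : e ^+ 2 <= e by rewrite expr2 ler_piMl.
have := ler_wpM2r s2_ge0 e2_le_e; have := ler_wpM2r s2_ge0 e_le_eps.
have := mulr_ge0 e_ge0 s2_ge0.
have -> : (e / 32 * s) ^+ 2 = e ^+ 2 * s ^+ 2 / 1024 by field.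
lra.
Qed.

(* Only the first t+1 ~ (e/32) sqrt n pairs are used, so that collisions stay rare. *)
Lemma card_A_set_large_scaled (R : realType) (eps e : R) (V1 V2 : finType)
    (adj : V1 -> V2 -> bool) (k : nat) (x y : 'I_k -> V1) :
  0 < e <= 1 -> e <= eps -> (0 < #|V2|)%N ->
  Num.sqrt (#|V2|%:R : R) < k.+1%:R -> pair_matching adj eps x y ->
  (3 * 2 ^ #|V2| <= 4 * #|[set W : {set V2} |
      (e / 64 * Num.sqrt (#|V2|%:R : R) <= (size (A_set adj R x y W))%:R)%R]|)%N.
Proof.
move=> /andP[e_gt0 e_le1] e_le_eps N_gt0 s_lt_k1 matching.
set s := Num.sqrt _ in s_lt_k1 *.
have s_ge1 : 1 <= s by rewrite -sqrtr1 ler_sqrt // ler1n.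
have e01 : 0 <= e <= 1 by rewrite e_le1 ltW.
pose t := Num.truncn (e / 32 * s).
have t_le : t%:R <= e / 32 * s by rewrite truncn_le mulr_ge0 ?divr_ge0 ?ltW //; lra.
have lt_t : e / 32 * s < t.+1%:R by rewrite truncnS_gt.
have t_lt_k : (t < k)%N by apply: natr_le_scale_lt e01 _ t_le; rewrite s_ge1.
have := natr_le_scale_sqr e01 e_le_eps t_le; rewrite sqr_sqrtr ?ler0n // => t_small.
apply: leq_trans (card_A_set_large matching t_lt_k (ltn0Sn t) N_gt0 t_small) _.
rewrite leq_mul2l subset_leq_card ?orbT //; apply/subsetP => W.
by rewrite !inE -(ltr_nat R) natrM => lt_A; lra.
Qed.

Unset Implicit Arguments.

Theorem lemma3p4 (R : realType) :
  forall eps : R, 0 < eps ->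
  exists delta : R, 0 < delta /\
  forall (V1 V2 : finType) (adj : V1 -> V2 -> bool) (k : nat)
         (x y : 'I_k -> V1),
    (#|V2| <= 2 * #|V1|)%N ->
    (* k = |V2|^0.5, rounded down *)
    (k%:R <= Num.sqrt (#|V2|%:R : R) < k.+1%:R) ->
    pair_matching adj eps x y ->
    (* W uniform among all subsets of V2 *)
    (#|[set W : {set V2} |
          delta * Num.sqrt (#|V2|%:R : R) <= (size (A_set adj R x y W))%:R]|%:R
       / #|{: {set V2}}|%:R : R) >= 3 / 4.
Proof.
move=> eps eps_gt0; pose e := Num.min 1 eps.
have e01 : 0 < e <= 1 by rewrite lt_min eps_gt0 ltr01 ge_min lexx.
have e_le_eps : e <= eps by rewrite ge_min lexx orbT.
exists (e / 64); split => [|V1 V2 adj k x y _ /andP[_ s_lt_k1] matching].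
  by rewrite divr_gt0 // (andP e01).1.
rewrite card_set_of ler_pdivlMr ?ltr0n ?expn_gt0 //.
have [N0|N_gt0] := posnP #|V2|.
  rewrite (_ : [set W | _] = setT) ?cardsT ?card_set_of N0; first lra.
  by apply/setP => W; rewrite !inE sqrtr0 mulr0 ler0n.
have := card_A_set_large_scaled e01 e_le_eps N_gt0 s_lt_k1 matching.
by rewrite -(ler_nat R) !natrM; lra.
Qed.
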